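(* If an unbounded ballean $X$ has bounded growth, then $X$ contains a discrete subballean.
   Context: A ballean is a pair $(X,\mathcal E_X)$ where $X$ is a set and $\mathcal E_X$ is a family of subsets of $X\times X$ (entourages) such that: each $E\in\mathcal E_X$ contains the diagonal $\Delta_X$; for any $E,F\in\mathcal E_X$ there is $D\in\mathcal E_X$ with $E\circ F^{-1}\subset D$; and $\bigcup\mathcal E_X=X\times X$. For $E\subset X\times X$, $x\in X$, $A\subset X$: $E[x]=\{y:(x,y)\in E\}$, $E[A]=\bigcup_{a\in A}E[a]$. $B\subset X$ is bounded if $B\subset E[x]$ for some $E\in\mathcal E_X$, $x\in X$; $X$ is unbounded if $X$ itself is not bounded. A subballean on $Y\subset X$ is $(Y,\{(Y\times Y)\cap E:E\in\mathcal E_X\})$. A ballean $Y$ is discrete if $Y$ is unbounded and for every entourage $E$ of $Y$ there is a bounded $B_E\subset Y$ with $E[y]=\{y\}$ for all $y\in Y\setminus B_E$. $X$ has bounded growth if there is $G\subset X\times X$ with $G[B]$ bounded for all bounded $B\subset X$, and for each $E\in\mathcal E_X$ a bounded $B$ with $E[x]\subset G[x]$ for all $x\in X\setminus B$. *)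

Set Implicit Arguments.

Definition ents (X : Type) := (X -> X -> Prop) -> Prop.

Definition rcomp (X : Type) (E F : X -> X -> Prop) : X -> X -> Prop :=
  fun x z => exists y, E x y /\ F y z.

Definition rinv (X : Type) (F : X -> X -> Prop) : X -> X -> Prop :=
  fun x y => F y x.

Definition rsub (X : Type) (E F : X -> X -> Prop) : Prop :=
  forall x y, E x y -> F x y.

Definition is_ballean (X : Type) (EX : ents X) : Prop :=
  (forall E, EX E -> forall x, E x x) /\
  (forall E F, EX E -> EX F -> exists D, EX D /\ rsub (rcomp E (rinv F)) D) /\
  (forall x y : X, exists E, EX E /\ E x y).

Definition ball (X : Type) (E : X -> X -> Prop) (x : X) : X -> Prop := fun y => E x y.
Definition ballset (X : Type) (E : X -> X -> Prop) (A : X -> Prop) : X -> Prop :=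
  fun y => exists a, A a /\ E a y.

Definition bounded (X : Type) (EX : ents X) (B : X -> Prop) : Prop :=
  exists E x, EX E /\ forall y, B y -> ball E x y.

Definition unbounded (X : Type) (EX : ents X) : Prop :=
  ~ bounded EX (fun _ => True).

Definition sub_ents (X : Type) (EX : ents X) (Y : X -> Prop) : ents {x : X | Y x} :=
  fun R => exists E, EX E /\
    forall a b : {x : X | Y x}, R a b <-> E (proj1_sig a) (proj1_sig b).

Definition discrete (X : Type) (EX : ents X) : Prop :=
  unbounded EX /\
  forall E, EX E -> exists B, bounded EX B /\
    forall y, ~ B y -> forall z, ball E y z <-> z = y.

Definition bounded_growth (X : Type) (EX : ents X) : Prop :=
  exists G : X -> X -> Prop,
    (forall B, bounded EX B -> bounded EX (ballset G B)) /\
    (forall E, EX E -> exists B, bounded EX B /\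
       forall x, ~ B x -> forall y, ball E x y -> ball G x y).

(* Let G be the relation witnessing bounded growth. By Zorn's lemma pick a maximal
   set A in which no two distinct points are G-related in both directions.
   Maximality gives X = A ∪ G[A]; as G[A] is bounded whenever A is, A is unbounded.
   Given an entourage E, enlarge it to a symmetric entourage E'; outside a bounded
   set B we have E'[x] ⊆ G[x], so two points of A off E'[B] that are E-related are
   G-related both ways and hence equal. *)
From Stdlib Require Import Classical ProofIrrelevance.
From mathcomp Require classical_sets.
Set Implicit Arguments.

Section BalleanFacts.
Variables (X : Type) (EX : ents X).
Hypothesis ballean_EX : is_ballean EX.

Lemma entourage_refl E x : EX E -> E x x.
Proof. intros HE. exact (proj1 ballean_EX E HE x). Qed.

Lemma entourage_inv F : EX F -> exists D, EX D /\ rsub (rinv F) D.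
Proof.
  intros HF. destruct (proj1 (proj2 ballean_EX) F F HF HF) as [D [HD sub]].
  exists D; split; [exact HD|].
  intros x y Fyx. apply sub. exists x. split; [apply entourage_refl|]; assumption.
Qed.

Lemma entourage_comp E F : EX E -> EX F -> exists D, EX D /\ rsub (rcomp E F) D.
Proof.
  intros HE HF. destruct (entourage_inv HF) as [F' [HF' sF']].
  destruct (proj1 (proj2 ballean_EX) E F' HE HF') as [D [HD sub]].
  exists D; split; [exact HD|].
  intros x z [y [Exy Fyz]]. apply sub. exists y. split; [exact Exy|]. apply sF'; exact Fyz.
Qed.

Lemma entourage_symmetric_cover E :
  EX E -> exists D, EX D /\ rsub E D /\ rsub (rinv E) D.
Proof.
  intros HE. destruct (entourage_inv HE) as [E' [HE' sE']].
  destruct (entourage_comp HE HE') as [D [HD sub]].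
  exists D; split; [exact HD|split]; intros x y Hxy; apply sub.
  - exists y. split; [exact Hxy|apply entourage_refl; exact HE'].
  - exists x. split; [apply entourage_refl; exact HE|apply sE'; exact Hxy].
Qed.

Lemma bounded_ballset E B : EX E -> bounded EX B -> bounded EX (ballset E B).
Proof.
  intros HE [F [c [HF Bc]]]. destruct (entourage_comp HF HE) as [D [HD sub]].
  exists D, c; split; [exact HD|].
  intros y [b [Bb Eby]]. apply sub. exists b. split; [apply Bc|]; assumption.
Qed.

Lemma bounded_union B1 B2 : bounded EX B1 -> bounded EX B2 ->
  bounded EX (fun x => B1 x \/ B2 x).
Proof.
  intros [F1 [c1 [HF1 B1c]]] [F2 [c2 [HF2 B2c]]].
  destruct (proj2 (proj2 ballean_EX) c1 c2) as [K [HK Kc]].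
  destruct (entourage_comp HK HF2) as [F2' [HF2' sF2']].
  destruct (entourage_symmetric_cover HF1) as [F1' [HF1' [sF1' _]]].
  destruct (entourage_comp HF1' HF2') as [D [HD sub]].
  exists D, c1; split; [exact HD|]. intros y [Hy|Hy]; apply sub.
  - exists y. split; [apply sF1', B1c; exact Hy|apply entourage_refl; exact HF2'].
  - exists c1. split; [apply entourage_refl; exact HF1'|].
    apply sF2'. exists c2. split; [exact Kc|apply B2c; exact Hy].
Qed.

Lemma bounded_sub_ents (Y : X -> Prop) (y0 : {x : X | Y x}) C :
  bounded EX C -> bounded (sub_ents EX Y) (fun a => C (proj1_sig a)).
Proof.
  intros [F [c [HF Cc]]].
  destruct (proj2 (proj2 ballean_EX) (proj1_sig y0) c) as [K [HK Kc]].
  destruct (entourage_comp HK HF) as [D [HD sub]].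
  exists (fun a b : {x : X | Y x} => D (proj1_sig a) (proj1_sig b)), y0. split.
  - exists D; split; [exact HD|]. intros a b; reflexivity.
  - intros y Cy. apply sub. exists c. split; [exact Kc|apply Cc; exact Cy].
Qed.

Lemma bounded_of_sub_ents (Y : X -> Prop) :
  bounded (sub_ents EX Y) (fun _ => True) -> bounded EX Y.
Proof.
  intros [R [y0 [[E [HE RE]] Ry0]]].
  exists E, (proj1_sig y0); split; [exact HE|].
  intros y Yy. apply (RE y0 (exist _ y Yy)). exact (Ry0 (exist _ y Yy) I).
Qed.

End BalleanFacts.

Definition separated (X : Type) (G : X -> X -> Prop) (Y : X -> Prop) : Prop :=
  forall y z, Y y -> Y z -> G y z -> G z y -> y = z.

Lemma exists_maximal_separated (X : Type) (G : X -> X -> Prop) :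
  exists A, separated G A /\ forall x, A x \/ ballset G A x.
Proof.
  assert (chain_sup : forall F : (X -> Prop) -> Prop,
     classical_sets.subset F (separated G) ->
     classical_sets.total_on F classical_sets.subset ->
     separated G (classical_sets.bigcup F (fun Y => Y))).
  { intros F Fsep Ftot y z [Y1 F1 Y1y] [Y2 F2 Y2z].
    destruct (Ftot _ _ F1 F2) as [s|s].
    - apply (Fsep _ F2); auto.
    - apply (Fsep _ F1); auto. }
  destruct (classical_sets.Zorn_bigcup chain_sup) as [A [sepA maxA]].
  exists A. split; [exact sepA|]. intros x.
  destruct (classic (A x)) as [Ax|nAx]; [left; exact Ax|right].
  apply NNPP; intros notGAx.
  apply (maxA (fun z => A z \/ z = x)).
  - split.
    + intros t At; left; exact At.
    + intros sub. exact (nAx (sub x (or_intror eq_refl))).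
  - intros y z [Ay|ey] [Az|ez] Gyz Gzy.
    + apply sepA; assumption.
    + subst z. exfalso; apply notGAx; exists y; auto.
    + subst y. exfalso; apply notGAx; exists z; auto.
    + congruence.
Qed.

Section SeparatedSubballean.
Variables (X : Type) (EX : ents X) (G : X -> X -> Prop) (A : X -> Prop).
Hypothesis ballean_EX : is_ballean EX.
Hypothesis G_bounded : forall B, bounded EX B -> bounded EX (ballset G B).
Hypothesis G_absorbs : forall E, EX E -> exists B, bounded EX B /\
  forall x, ~ B x -> forall y, ball E x y -> ball G x y.
Hypothesis A_separated : separated G A.
Hypothesis A_covers : forall x, A x \/ ballset G A x.

Lemma separated_unbounded : unbounded EX -> unbounded (sub_ents EX A).
Proof.
  intros unbX bA_sub. apply unbX.
  pose proof (bounded_of_sub_ents bA_sub) as bA.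
  destruct (bounded_union ballean_EX bA (G_bounded bA)) as [D [c [HD Dc]]].
  exists D, c; split; [exact HD|]. intros y _. apply Dc, A_covers.
Qed.

Lemma separated_entourage_trivial E : EX E -> exists C, bounded EX C /\
  forall y z, A y -> A z -> ~ C y -> E y z -> y = z.
Proof.
  intros HE.
  destruct (entourage_symmetric_cover ballean_EX E HE) as [E' [HE' [sE sEinv]]].
  destruct (G_absorbs HE') as [B [bB absorbB]].
  exists (ballset E' B). split; [apply bounded_ballset; assumption|].
  intros y z Ay Az nCy Eyz.
  assert (nBy : ~ B y).
  { intros By. apply nCy. exists y. split; [exact By|apply entourage_refl with EX; assumption]. }
  (* z is E'-close to y, so it avoids B as well *)
  assert (nBz : ~ B z).
  { intros Bz. apply nCy. exists z. split; [exact Bz|apply sEinv; exact Eyz]. }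
  apply A_separated; [exact Ay|exact Az|..].
  - apply (absorbB y nBy), sE; exact Eyz.
  - apply (absorbB z nBz), sEinv; exact Eyz.
Qed.

Lemma separated_discrete : unbounded EX -> discrete (sub_ents EX A).
Proof.
  intros unbX. split; [exact (separated_unbounded unbX)|].
  intros R [E [HE RE]].
  destruct (separated_entourage_trivial HE) as [C [bC trivC]].
  assert (A_inhabited : exists a, A a).
  { destruct bC as [F [c _]].
    destruct (A_covers c) as [Ac|[a [Aa _]]]; [exists c|exists a]; assumption. }
  destruct A_inhabited as [a Aa].
  exists (fun a => C (proj1_sig a)).
  split; [exact (bounded_sub_ents ballean_EX A (exist A a Aa) bC)|].
  intros [y Ay] nCy [z Az]. unfold ball. rewrite RE. simpl. split.
  - intros Eyz. destruct (trivC y z Ay Az nCy Eyz).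
    f_equal. apply proof_irrelevance.
  - intros e. injection e as ->. apply entourage_refl with EX; assumption.
Qed.

End SeparatedSubballean.

Theorem proposition3p6 (X : Type) (EX : ents X) :
  is_ballean EX -> unbounded EX -> bounded_growth EX ->
  exists Y : X -> Prop, discrete (sub_ents EX Y).
Proof.
  intros ballean_EX unbX [G [G_bounded G_absorbs]].
  destruct (exists_maximal_separated G) as [A [A_separated A_covers]].
  exists A.
  exact (separated_discrete ballean_EX G_bounded G_absorbs A_separated A_covers unbX).
Qed.
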